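(* Assume $\widetilde p_i\propto i^{-\beta}$ for a constant $\beta>1$, $M=\omega_K(1)$, and total training time $T\eqsim M^\beta$. Let $\alpha\in(0,1)$ and run GD with learning rate $\eta$ satisfying $\eta p_1\lesssim1$ from $\mathbf{W}_0=\mathbf{0}$. Then $$\mathcal{L}^{\mathrm{GD}}(T)-\mathcal{L}^*\gtrsim\frac{\log K}{T^{1-1/\beta}}.$$
   Context: Setup: $K=MC$ items in $M$ groups of $C$ items (group $i$: indices $(i-1)C+1,\dots,iC$); $\widetilde p_1>\dots>\widetilde p_M>0$, $\sum_i\widetilde p_i=1$, $p_j=\widetilde p_i/C$ for $j$ in group $i$. $\mathbf{E},\widetilde{\mathbf{E}}\in\mathbb{R}^{K\times K}$ have orthonormal columns. Noise: $p_{i\mid j}=1-\alpha+\alpha/K$ if $i=j$, $\alpha/K$ otherwise. $\widehat p_{i\mid j}(\mathbf{W})=\exp(\widetilde{\mathbf{E}}_i^\top\mathbf{W}\mathbf{E}_j)/\sum_k\exp(\widetilde{\mathbf{E}}_k^\top\mathbf{W}\mathbf{E}_j)$; $\mathcal{L}(\mathbf{W})=-\sum_jp_j\sum_ip_{i\mid j}\log\widehat p_{i\mid j}(\mathbf{W})$, with minimal value $\mathcal{L}^*=-\big(1-\alpha+\tfrac{\alpha}{K}\big)\log\big(1-\alpha+\tfrac{\alpha}{K}\big)-\tfrac{\alpha(K-1)}{K}\log\tfrac{\alpha}{K}$. GD: $\mathbf{W}_{t+1}=\mathbf{W}_t-\eta\nabla\mathcal{L}(\mathbf{W}_t)$, $\mathcal{L}^{\mathrm{GD}}(T)=\mathcal{L}(\mathbf{W}_T)$.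 Regime $K\gg1$, $M\ll C$; $\omega_K(1)$ denotes a quantity tending to infinity as $K\to\infty$; $\eqsim,\lesssim,\gtrsim$ hide constant factors. *)

From HB Require Import structures.
From mathcomp Require Import all_boot all_order all_algebra.
From mathcomp Require Import all_classical all_reals all_analysis.
Set Implicit Arguments. Unset Strict Implicit. Unset Printing Implicit Defensive.
Import Order.TTheory GRing.Theory Num.Theory.
Local Open Scope ring_scope.

(* group probabilities, groups indexed 0..M-1 (group i corresponds to paper's i+1):
   ptil i = (i+1)^(-beta) / sum_{k<M} (k+1)^(-beta) *)
Definition ptil (R : realType) (beta : R) (M : nat) (i : nat) : R :=
  ((i.+1)%:R `^ (- beta)) / \sum_(k < M) ((k.+1)%:R `^ (- beta)).

(* item j (0-indexed) belongs to group j %/ C; p_j = ptil (j / C) / C *)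
Definition pitem (R : realType) (beta : R) (M C : nat) (j : 'I_(M * C)) : R :=
  ptil beta M (j %/ C) / C%:R.

Definition pcond (R : realType) (alpha : R) (K : nat) (i j : 'I_K) : R :=
  if i == j then 1 - alpha + alpha / K%:R else alpha / K%:R.

(* model softmax: logits Et_i^T W E_j = (Et^T W E)_{ij} *)
Definition phat (R : realType) (K : nat) (E Et W : 'M[R]_K) (i j : 'I_K) : R :=
  expR ((Et^T *m W *m E) i j) / \sum_(k < K) expR ((Et^T *m W *m E) k j).

Definition loss (R : realType) (beta alpha : R) (M C : nat)
    (E Et : 'M[R]_(M * C)) (W : 'M[R]_(M * C)) : R :=
  - \sum_(j < M * C) @pitem R beta M C j *
      \sum_(i < M * C) @pcond R alpha (M * C) i j * ln (@phat R (M * C) E Et W i j).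

Definition grad (R : realType) (K : nat) (f : 'M[R]_K -> R) (W : 'M[R]_K) : 'M[R]_K :=
  \matrix_(i, j) derive1 (fun t : R => f (W + t *: delta_mx i j)) 0.

Definition gd_iter (R : realType) (K : nat) (f : 'M[R]_K -> R) (eta : R) (T : nat)
  : 'M[R]_K := iter T (fun W => W - eta *: grad f W) 0.

Definition Lstar (R : realType) (alpha : R) (K : nat) : R :=
  - (1 - alpha + alpha / K%:R) * ln (1 - alpha + alpha / K%:R)
  - alpha * (K%:R - 1) / K%:R * ln (alpha / K%:R).

(* Since E and Et are orthonormal, a gradient step on W moves the logit matrix
   Z = Et^T W E by Z <- Z - eta G(Z), where column b of G is
   p_b (softmax(Z)_.b - p(.|b)).  Hence after T steps every logit in column b
   has modulus at most T eta p_b.  The excess loss is the p-average of the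
   column relative entropies KL(p(.|b) || softmax(Z)_.b); these are
   nonnegative, and at least ln K - 2B - L* when the logits of the column are
   bounded by B, which is of order (1 - alpha) ln K.  For items of the last
   M/2 groups, T eta p_b = O(1) because T <= a2 M^beta and p_b <= (2/M)^beta p_1,
   so each of them contributes order ln K, while their total mass is of order
   M^(1-beta), i.e. of order T^-(1-1/beta). *)

From HB Require Import structures.
From mathcomp Require Import all_boot all_order all_algebra.
From mathcomp Require Import all_classical all_reals all_analysis.
From mathcomp.algebra_tactics Require Import ring lra.
From mathcomp Require Import zify.
Import Order.TTheory GRing.Theory Num.Theory.
Local Open Scope ring_scope.

Section RealFacts.
Context {R : realType}.

Lemma ln_le_subr1 (x : R) : 0 < x -> ln x <= x - 1.
Proof.
by move=> x0; have := @le_ln1Dx R (x - 1); rewrite addrCA subrr addr0; apply; lra.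
Qed.

Lemma subr_le_mul_lnB (p s : R) : 0 <= p -> 0 < s -> p - s <= p * (ln p - ln s).
Proof.
rewrite le0r => /predU1P[-> | p0] s0; first by rewrite mul0r; lra.
have := ln_le_subr1 _ (divr_gt0 s0 p0); rewrite ln_div ?posrE // => h.
have := ler_wpM2l (ltW p0) h.
have -> : p * (s / p - 1) = s - p by field; rewrite gt_eqF.
lra.
Qed.

Lemma is_derive_affine (a b x : R) : is_derive x 1 (fun t => a + t * b) b.
Proof.
have := is_deriveD (is_derive_cst a x 1)
  (is_deriveM (is_derive_id x 1) (is_derive_cst b x 1)).
by rewrite /GRing.scale /= mulr0 mulr1 !add0r.
Qed.

Lemma is_derive_sumr {n} {h : 'I_n -> R -> R} {x : R} {dh : 'I_n -> R} :
  (forall i, is_derive x 1 (h i) (dh i)) ->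
  is_derive x 1 (fun y => \sum_(i < n) h i y) (\sum_(i < n) dh i).
Proof. by move=> /is_derive_sum; rewrite fct_sumE. Qed.

Lemma is_derive_mulr (c : R) {f : R -> R} {x df : R} :
  is_derive x 1 f df -> is_derive x 1 (fun y => c * f y) (c * df).
Proof. exact: is_deriveZ. Qed.

Lemma ln_nat_unbounded (y : R) :
  exists N, forall M, (N <= M)%N -> (0 < M)%N /\ y <= ln M%:R.
Proof.
exists (Num.Def.archi_bound (expR y)).+1 => M NM; split; first exact: leq_trans NM.
have M0 : 0 < M%:R :> R by rewrite ltr0n; exact: leq_trans NM.
rewrite -[y in y <= _]expRK ler_ln ?posrE ?expR_gt0 //.
by have := archi_boundP (expR_ge0 y); rewrite -(ler_nat R) -natr1 in NM; lra.
Qed.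

End RealFacts.

Lemma mul_delta_mx_entry (R : pzRingType) m n p q
    (A : 'M[R]_(m, n)) (B : 'M[R]_(p, q)) (i : 'I_n) (j : 'I_p) a b :
  (A *m delta_mx i j *m B) a b = A a i * B j b.
Proof.
rewrite !mxE (bigD1 j) //= big1 ?addr0 => [|k /negbTE jk]; last first.
  by rewrite !mxE big1 ?mul0r // => l _; rewrite !mxE jk andbF mulr0.
rewrite !mxE (bigD1 i) //= big1 ?addr0 => [|l /negbTE il].
  by rewrite !mxE !eqxx mulr1.
by rewrite !mxE il mulr0.
Qed.

Section ColumnSoftmax.
Context {R : realType} {n : nat}.
Implicit Types (Z : 'M[R]_n) (i j : 'I_n).

Definition csoftmax Z i j := expR (Z i j) / \sum_(k < n) expR (Z k j).

Lemma sumr_expR_gt0 (f : 'I_n -> R) i : 0 < \sum_(k < n) expR (f k).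
Proof.
rewrite (bigD1 i) //=; apply: (lt_le_trans (expR_gt0 (f i))).
by rewrite lerDl sumr_ge0 // => k _; exact: expR_ge0.
Qed.

Lemma csoftmax_gt0 Z i j : 0 < csoftmax Z i j.
Proof. by rewrite divr_gt0 ?expR_gt0 ?(sumr_expR_gt0 _ i). Qed.

Lemma sum_csoftmax Z j : \sum_(i < n) csoftmax Z i j = 1.
Proof. by rewrite -mulr_suml divff // gt_eqF // (sumr_expR_gt0 _ j). Qed.

Lemma csoftmax_le1 Z i j : csoftmax Z i j <= 1.
Proof.
rewrite -(sum_csoftmax Z j) (bigD1 i) //= lerDl.
by apply: sumr_ge0 => k _; exact: ltW (csoftmax_gt0 Z k j).
Qed.

Lemma ln_csoftmax Z i j :
  ln (csoftmax Z i j) = Z i j - ln (\sum_(k < n) expR (Z k j)).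
Proof.
have S0 := sumr_expR_gt0 (Z^~ j) i.
by rewrite ln_div ?posrE ?expR_gt0 // expRK.
Qed.

Lemma is_derive_ln_sumr_expR (z d : 'I_n -> R) i :
  is_derive (0 : R) 1 (fun t => ln (\sum_(k < n) expR (z k + t * d k)))
    ((\sum_(k < n) expR (z k) * d k) / \sum_(k < n) expR (z k)).
Proof.
have S0 : \sum_(k < n) expR (z k + 0 * d k) = \sum_(k < n) expR (z k).
  by apply: eq_bigr => k _; rewrite mul0r addr0.
have dS : is_derive (0 : R) 1 (fun t => \sum_(k < n) expR (z k + t * d k))
    (\sum_(k < n) expR (z k) * d k).
  apply: is_derive_sumr => k.
  have := is_derive1_comp (is_derive_expR _) (is_derive_affine (z k) (d k) 0).
  by rewrite mul0r addr0.
have := is_derive1_comp (is_derive1_ln _) dS; rewrite /= S0 mulrC.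
by apply; exact: sumr_expR_gt0 i.
Qed.

End ColumnSoftmax.

Section CrossEntropy.
Context {R : realType} {n : nat}.
Variables (pw : 'I_n -> R) (pc : 'I_n -> 'I_n -> R).
Hypothesis sum_pc : forall j, \sum_(i < n) pc i j = 1.
Implicit Types (Z D : 'M[R]_n).

Definition xent Z := - \sum_(j < n) pw j * \sum_(i < n) pc i j * ln (csoftmax Z i j).

Definition xent_grad Z : 'M[R]_n :=
  \matrix_(a, b) (pw b * (csoftmax Z a b - pc a b)).

Lemma xentE Z :
  xent Z = \sum_(j < n) pw j *
    (ln (\sum_(k < n) expR (Z k j)) - \sum_(i < n) pc i j * Z i j).
Proof.
rewrite /xent -sumrN; apply: eq_bigr => j _.
under eq_bigr do rewrite ln_csoftmax mulrBr.
by rewrite sumrB -mulr_suml sum_pc mul1r; ring.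
Qed.

Lemma is_derive_xent Z D :
  is_derive (0 : R) 1 (fun t => xent (Z + t *: D))
    (\sum_(j < n) \sum_(i < n) xent_grad Z i j * D i j).
Proof.
have lin j t : \sum_(i < n) pc i j * (Z + t *: D) i j =
    \sum_(i < n) pc i j * Z i j + t * \sum_(i < n) pc i j * D i j.
  rewrite mulr_sumr -big_split; apply: eq_bigr => i _.
  by rewrite !mxE mulrDr mulrCA.
have -> : (fun t => xent (Z + t *: D)) = (fun t => \sum_(j < n) pw j *
    (ln (\sum_(k < n) expR (Z k j + t * D k j)) -
     (\sum_(i < n) pc i j * Z i j + t * \sum_(i < n) pc i j * D i j))).
  apply/funext => t; rewrite xentE; apply: eq_bigr => j _; rewrite lin.
  by under eq_bigr do rewrite !mxE.
have := is_derive_sumr (fun j => is_derive_mulr (pw j) (is_deriveB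
  (is_derive_ln_sumr_expR (Z^~ j) (D^~ j) j)
  (is_derive_affine (\sum_(i < n) pc i j * Z i j) (\sum_(i < n) pc i j * D i j) 0))).
congr is_derive; apply: eq_bigr => j _.
rewrite mulr_suml -sumrB mulr_sumr; apply: eq_bigr => i _.
by rewrite mxE /csoftmax; ring.
Qed.

Lemma grad_xent (E Et W : 'M[R]_n) :
  grad (fun W => xent (Et^T *m W *m E)) W =
  Et *m xent_grad (Et^T *m W *m E) *m E^T.
Proof.
apply/matrixP => i j; rewrite /grad mxE derive1E.
set Z := Et^T *m W *m E; set D := Et^T *m delta_mx i j *m E.
have -> : (fun t => xent (Et^T *m (W + t *: delta_mx i j) *m E)) =
    (fun t => xent (Z + t *: D)).
  by apply/funext => t; rewrite mulmxDr mulmxDl -scalemxAr -scalemxAl.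
have [_ ->] := is_derive_xent Z D.
rewrite !mxE; apply: eq_bigr => b _; rewrite !mxE mulr_suml; apply: eq_bigr => a _.
by rewrite /D mul_delta_mx_entry !mxE; ring.
Qed.

Lemma gd_step_logits (E Et W : 'M[R]_n) (eta : R) :
  E^T *m E = 1%:M -> Et^T *m Et = 1%:M ->
  Et^T *m (W - eta *: grad (fun W => xent (Et^T *m W *m E)) W) *m E =
  Et^T *m W *m E - eta *: xent_grad (Et^T *m W *m E).
Proof.
move=> hE hEt; rewrite grad_xent mulmxBr mulmxBl -scalemxAr -scalemxAl.
by rewrite !mulmxA hEt mul1mx -[_ *m E^T *m E]mulmxA hE mulmx1.
Qed.

Hypotheses (pw_ge0 : forall j, 0 <= pw j) (pc_ge0 : forall i j, 0 <= pc i j).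

Lemma pc_le1 i j : pc i j <= 1.
Proof. by rewrite -(sum_pc j) (bigD1 i) //= lerDl sumr_ge0. Qed.

Lemma xent_grad_bound Z a b : `|xent_grad Z a b| <= pw b.
Proof.
rewrite mxE normrM ger0_norm // ler_piMr // ler_norml.
have := csoftmax_gt0 Z a b; have := csoftmax_le1 Z a b.
have := pc_ge0 a b; have := pc_le1 a b; lra.
Qed.

Lemma xent_step_bound Z (eta x : R) a b : 0 <= eta -> `|Z a b| <= x ->
  `|(Z - eta *: xent_grad Z) a b| <= x + eta * pw b.
Proof.
move=> eta_ge0 hZ; rewrite 3!mxE; apply: le_trans (ler_normB _ _) _.
by rewrite normrM ger0_norm // lerD // ler_wpM2l // xent_grad_bound.
Qed.

Lemma gd_logits_bound (E Et : 'M[R]_n) (eta : R) (t : nat) a b :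
  E^T *m E = 1%:M -> Et^T *m Et = 1%:M -> 0 <= eta ->
  `|(Et^T *m gd_iter (fun W => xent (Et^T *m W *m E)) eta t *m E) a b|
    <= t%:R * (eta * pw b).
Proof.
move=> hE hEt eta_ge0; elim: t => [|t IH].
  by rewrite /gd_iter /= mulmx0 mul0mx mxE normr0 mul0r.
rewrite /gd_iter iterS -/(gd_iter _ eta t) gd_step_logits // -natr1 mulrDl mul1r.
exact: xent_step_bound.
Qed.

End CrossEntropy.

Section RelativeEntropy.
Context {R : realType} {n : nat}.
Variables (pw : 'I_n -> R) (pc : 'I_n -> 'I_n -> R).
Hypotheses (sum_pc : forall j, \sum_(i < n) pc i j = 1)
  (pc_ge0 : forall i j, 0 <= pc i j).
Implicit Types (Z : 'M[R]_n).

Definition relent_col Z j :=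
  \sum_(i < n) pc i j * (ln (pc i j) - ln (csoftmax Z i j)).

Lemma relent_col_ge0 Z j : 0 <= relent_col Z j.
Proof.
have : \sum_(i < n) (pc i j - csoftmax Z i j) <= relent_col Z j.
  by apply: ler_sum => i _; rewrite subr_le_mul_lnB ?csoftmax_gt0.
by rewrite sumrB sum_pc sum_csoftmax subrr.
Qed.

Lemma relent_col_ge_ln Z j (B : R) : (forall i, `|Z i j| <= B) ->
  ln n%:R - 2 * B + \sum_(i < n) pc i j * ln (pc i j) <= relent_col Z j.
Proof.
move=> hZ; have n0 : (0 < n)%N by case: n j {hZ} => [[]|].
have lse_ge : ln n%:R - B <= ln (\sum_(k < n) expR (Z k j)).
  rewrite -[B]expRK -ln_div ?posrE ?ltr0n ?expR_gt0 // ler_ln ?posrE;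
    [|by rewrite divr_gt0 ?ltr0n ?expR_gt0|exact: sumr_expR_gt0 j].
  rewrite ler_pdivrMr ?expR_gt0 // mulr_suml.
  have -> : n%:R = \sum_(k < n) (1 : R) by rewrite sumr_const card_ord.
  apply: ler_sum => k _; rewrite -expRD; apply: le_trans (expR_ge1Dx _).
  by have := hZ k; rewrite ler_norml; lra.
rewrite /relent_col; under [X in _ <= X]eq_bigr do rewrite mulrBr.
rewrite sumrB addrC lerD2l.
rewrite -sumrN -[X in X <= _]mul1r -{1}(sum_pc j) mulr_suml; apply: ler_sum => i _.
rewrite -[X in _ <= X]mulrN ler_wpM2l // ln_csoftmax.
by have := hZ i; rewrite ler_norml; lra.
Qed.

Hypotheses (sum_pw : \sum_(j < n) pw j = 1) (pw_ge0 : forall j, 0 <= pw j).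
Variable H : R.
Hypothesis entropy_pc : forall j, \sum_(i < n) pc i j * ln (pc i j) = - H.

Lemma xent_subr_entropy Z :
  xent pw pc Z - H = \sum_(j < n) pw j * relent_col Z j.
Proof.
rewrite -[H]mul1r -sum_pw mulr_suml /xent -sumrN -sumrB; apply: eq_bigr => j _.
rewrite /relent_col; under [X in _ = _ * X]eq_bigr do rewrite mulrBr.
by rewrite sumrB entropy_pc; ring.
Qed.

Lemma xent_subr_entropy_ge Z (L : R) (P : pred 'I_n) :
  (forall j, P j -> L <= relent_col Z j) ->
  L * \sum_(j < n | P j) pw j <= xent pw pc Z - H.
Proof.
move=> hP; rewrite xent_subr_entropy [X in _ <= X](bigID P) /= mulr_sumr.
rewrite -[X in X <= _]addr0.
apply: lerD; first by apply: ler_sum => j /hP hj; rewrite mulrC ler_wpM2l.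
by apply: sumr_ge0 => j _; rewrite mulr_ge0 ?relent_col_ge0.
Qed.

End RelativeEntropy.

Section NoisyLabels.
Context {R : realType}.
Variables (alpha : R) (K : nat).

Lemma sum_pcond_neq (j : 'I_K) (c : R) : \sum_(i < K | i != j) c = (K%:R - 1) * c.
Proof.
rewrite sumr_const cardC1 card_ord.
by case: K j => [[]//|k j]; rewrite -natr1 addrK mulr_natl.
Qed.

Lemma sum_pcond (j : 'I_K) : \sum_(i < K) pcond alpha i j = 1.
Proof.
rewrite (bigD1 j) //= /pcond eqxx.
under eq_bigr => i /negbTE -> do [].
have K0 : K%:R != 0 :> R by rewrite pnatr_eq0; case: K j => [[]|].
by rewrite sum_pcond_neq; field.
Qed.

Lemma Lstar_entropy (j : 'I_K) :
  \sum_(i < K) pcond alpha i j * ln (pcond alpha i j) = - Lstar alpha K.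
Proof.
rewrite (bigD1 j) //= /pcond eqxx.
under eq_bigr => i /negbTE -> do [].
have K0 : K%:R != 0 :> R by rewrite pnatr_eq0; case: K j => [[]|].
by rewrite sum_pcond_neq /Lstar; field.
Qed.

Hypothesis alpha01 : 0 < alpha <= 1.

Lemma pcond_ge0 (i j : 'I_K) : 0 <= pcond alpha i j.
Proof.
have K0 : 0 < K%:R :> R by rewrite ltr0n; case: K i j => [[]|].
have [a0 a1] := andP alpha01; have := divr_gt0 a0 K0.
by rewrite /pcond; case: (i == j); lra.
Qed.

Lemma Lstar_le : (0 < K)%N -> Lstar alpha K <= 1 + alpha * (ln K%:R - ln alpha).
Proof.
move=> K0; have K1 : 1 <= K%:R :> R by rewrite ler1n.
have [a0 a1] := andP alpha01.
pose P := 1 - alpha + alpha / K%:R; pose u : R := (K%:R - 1) / K%:R.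
have P0 : 0 <= P by rewrite /P; have := divr_gt0 a0 (lt_le_trans ltr01 K1); lra.
have PlnP : P - 1 <= P * ln P.
  by have := subr_le_mul_lnB P 1 P0 ltr01; rewrite ln1 subr0.
have u1 : u <= 1 by rewrite /u ler_pdivrMr ?mul1r; lra.
have lnKa : 0 <= ln K%:R - ln alpha by have := ln_ge0 K1; have := ln_le0 a1; lra.
have := ler_wpM2l (mulr_ge0 (ltW a0) lnKa) u1.
have -> : Lstar alpha K = - (P * ln P) + alpha * (ln K%:R - ln alpha) * u.
  rewrite /Lstar -/P ln_div ?posrE ?ltr0n //; rewrite /u; ring.
lra.
Qed.

Lemma relent_col_pcond_ge (Z : 'M[R]_K) j (B : R) :
  (forall i, `|Z i j| <= B) ->
  (1 - alpha) * ln K%:R - 2 * B - 1 + alpha * ln alpha <=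
  relent_col (@pcond R alpha K) Z j.
Proof.
move=> hZ; have K0 : (0 < K)%N by case: K j {Z hZ} => [[]|].
have := relent_col_ge_ln _ sum_pcond pcond_ge0 _ _ _ hZ; rewrite Lstar_entropy.
by have := Lstar_le K0; lra.
Qed.

End NoisyLabels.

Lemma sum_ord_mul_divn (V : nmodType) (G : nat -> V) M C : (0 < C)%N ->
  \sum_(j < M * C) G (j %/ C)%N = (\sum_(i < M) G i) *+ C.
Proof.
move=> C0; rewrite -(big_mkord xpredT (fun j => G (j %/ C)%N)).
rewrite -(big_mkord xpredT G) big_nat_mul -sumrMnl.
apply: eq_big_nat => i _; rewrite (@eq_big_nat _ _ _ _ _ _ (fun=> G i)).
  by rewrite sumr_const_nat mulSn addnK.
move=> j /andP[ij ji]; congr G; apply/eqP; rewrite eqn_leq -ltnS.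
by rewrite ltn_divLR // leq_divRL // ij ji.
Qed.

Section PowerLaw.
Context {R : realType}.
Variable beta : R.

Lemma powR_expR (a x : R) : 0 < a -> a `^ x = expR (x * ln a).
Proof. by move=> a0; rewrite /powR gt_eqF. Qed.

Lemma powR_sub_succ_ge (x : R) : 1 <= beta -> 0 < x ->
  (beta - 1) * (x + 1) `^ (- beta) <= x `^ (1 - beta) - (x + 1) `^ (1 - beta).
Proof.
move=> b1 x0; have x1 : 0 < x + 1 by lra.
rewrite !powR_expR //; set a := ln x; set b := ln (x + 1).
have lnba : (x + 1)^-1 <= b - a.
  have := ln_le_subr1 _ (divr_gt0 x0 x1); rewrite ln_div ?posrE // -/a -/b.
  have -> : x / (x + 1) - 1 = - (x + 1)^-1 by field; rewrite gt_eqF.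
  lra.
have eb : expR (- beta * b) = expR ((1 - beta) * b) * (x + 1)^-1.
  rewrite -[(x + 1)^-1]lnK ?posrE ?invr_gt0 // lnV ?posrE // -/b -expRD.
  by congr expR; ring.
have ea : expR ((1 - beta) * a) =
    expR ((1 - beta) * b) * expR ((beta - 1) * (b - a)).
  by rewrite -expRD; congr expR; ring.
rewrite eb ea; set E := expR ((1 - beta) * b); have E0 : 0 <= E := expR_ge0 _.
have := ler_wpM2l E0 (expR_ge1Dx ((beta - 1) * (b - a))).
have b1' : 0 <= beta - 1 by lra.
have := ler_wpM2l (mulr_ge0 E0 b1') lnba.
lra.
Qed.

Lemma sum_powRN_le M :
  1 < beta -> \sum_(k < M) (k.+1)%:R `^ (- beta) <= beta / (beta - 1).
Proof.
move=> b1; have b0 : 0 < beta - 1 by lra.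
have key m : (beta - 1) * \sum_(k < m.+1) (k.+1)%:R `^ (- beta) <=
    beta - (m.+1)%:R `^ (1 - beta).
  elim: m => [|m IH]; first by rewrite big_ord1 !powR1; lra.
  rewrite big_ord_recr /= mulrDr -[(m.+2)%:R]natr1.
  have := powR_sub_succ_ge (m.+1)%:R (ltW b1) (ltr0Sn _ _); lra.
rewrite ler_pdivlMr //; case: M => [|m]; first by rewrite big_ord0 mul0r; lra.
have := key m; have := powR_ge0 (m.+1)%:R (1 - beta); rewrite mulrC; lra.
Qed.

Lemma ptil_ge0 M i : 0 <= ptil beta M i.
Proof. by rewrite divr_ge0 ?powR_ge0 ?sumr_ge0 // => k _; exact: powR_ge0. Qed.

Lemma ptilE M i : ptil beta M i = (i.+1)%:R `^ (- beta) * ptil beta M 0.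
Proof. by rewrite /ptil powR1 mul1r. Qed.

Lemma sum_powRN_gt0 M : (0 < M)%N -> 0 < \sum_(k < M) (k.+1)%:R `^ (- beta).
Proof.
case: M => // m _; rewrite big_ord_recl powR1.
by rewrite ltr_pwDl ?ltr01 ?sumr_ge0 // => k _; exact: powR_ge0.
Qed.

Lemma sum_ptil M : (0 < M)%N -> \sum_(i < M) ptil beta M i = 1.
Proof. by move=> M0; rewrite -mulr_suml divff // gt_eqF // sum_powRN_gt0. Qed.

Lemma ptil_tail_ge M : 1 < beta -> (0 < M)%N ->
  (beta - 1) / (2 * beta) * M%:R `^ (1 - beta) <=
  \sum_(i < M | (M %/ 2 <= i)%N) ptil beta M i.
Proof.
move=> b1 M0; have MR : 0 < M%:R :> R by rewrite ltr0n.
have Z0 := sum_powRN_gt0 M M0; have Zle := sum_powRN_le M b1.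
have term_ge (i : 'I_M) : M%:R `^ (- beta) <= (i.+1)%:R `^ (- beta).
  rewrite !powRN lef_pV2 ?posrE ?powR_gt0 ?ltr0n //.
  by rewrite ge0_ler_powR ?nnegrE ?ler0n ?ler_nat //; lra.
have count : M%:R / 2 <= ((M - M %/ 2)%N)%:R :> R.
  rewrite natrB ?leq_div //; have := leq_divM M 2; rewrite -(ler_nat R) natrM; lra.
have tail_ge : ((M - M %/ 2)%N)%:R * M%:R `^ (- beta) <=
    \sum_(i < M | (M %/ 2 <= i)%N) (i.+1)%:R `^ (- beta).
  rewrite mulr_natl -sumr_const_nat big_geq_mkord.
  by apply: ler_sum => i _; exact: term_ge.
have eM : M%:R `^ (1 - beta) = M%:R * M%:R `^ (- beta).
  by rewrite powRD ?powRr1 ?ler0n // pnatr_eq0 -lt0n M0 implybT.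
rewrite /ptil -mulr_suml ler_pdivlMr // eM.
set m := M%:R `^ (- beta); have m0 : 0 <= m := powR_ge0 _ _.
have X0 : 0 <= (beta - 1) / (2 * beta) * (M%:R * m).
  by rewrite !mulr_ge0 ?invr_ge0 ?ler0n //; lra.
apply: le_trans (ler_wpM2l X0 Zle) _.
have -> : (beta - 1) / (2 * beta) * (M%:R * m) * (beta / (beta - 1)) =
    M%:R / 2 * m.
  by field; lra.
by apply: le_trans tail_ge; rewrite ler_wpM2r.
Qed.

Lemma powR_rate_le (a x : R) (M T : nat) : 1 < beta -> 0 < a -> 0 <= x ->
  (0 < M)%N -> a * M%:R `^ beta <= T%:R ->
  a `^ (1 - beta^-1) * x / T%:R `^ (1 - beta^-1) <= x * M%:R `^ (1 - beta).
Proof.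
move=> b1 a0 x0 M0 hT; set g := 1 - beta^-1.
have MR : 0 < M%:R :> R by rewrite ltr0n.
have Mb0 : 0 < M%:R `^ (beta - 1) := powR_gt0 _ MR.
have T0 : 0 < T%:R :> R by have := mulr_gt0 a0 (powR_gt0 beta MR); lra.
have g0 : 0 <= g by rewrite /g subr_ge0 invf_le1; lra.
have hTg : a `^ g * M%:R `^ (beta - 1) <= T%:R `^ g.
  have aM0 : 0 <= a * M%:R `^ beta by rewrite mulr_ge0 ?powR_ge0 ?(ltW a0).
  have -> : beta - 1 = beta * g by rewrite /g mulrBr mulfV ?mulr1 // gt_eqF; lra.
  rewrite powRrM -powRM ?powR_ge0 ?(ltW a0) //.
  by apply: ge0_ler_powR; rewrite ?nnegrE ?ler0n.
rewrite -[1 - beta]opprB powRN ler_pdivrMr ?powR_gt0 // mulrAC -mulrA mulrC.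
by rewrite ler_wpM2l // ler_pdivlMr.
Qed.

Lemma ptil_tail_rate (a y : R) (M T : nat) : 1 < beta -> 0 < a -> 0 <= y ->
  (0 < M)%N -> a * M%:R `^ beta <= T%:R ->
  (beta - 1) / (2 * beta) * a `^ (1 - beta^-1) * y / T%:R `^ (1 - beta^-1) <=
  y * \sum_(i < M | (M %/ 2 <= i)%N) ptil beta M i.
Proof.
move=> b1 a0 y0 M0 hT; apply: le_trans (ler_wpM2l y0 (ptil_tail_ge M b1 M0)).
have k0 : 0 <= (beta - 1) / (2 * beta) by rewrite divr_ge0; lra.
have := ler_wpM2l k0 (powR_rate_le a y M T b1 a0 y0 M0 hT); lra.
Qed.

End PowerLaw.

Section Groups.
Context {R : realType}.
Variables (beta : R) (M C : nat).
Hypothesis C0 : (0 < C)%N.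

Lemma pitem_ge0 (j : 'I_(M * C)) : 0 <= pitem beta j.
Proof. by rewrite divr_ge0 ?ptil_ge0. Qed.

Lemma sum_pitem_cond (P : pred nat) :
  \sum_(j < M * C | P (j %/ C)%N) pitem beta j = \sum_(i < M | P i) ptil beta M i.
Proof.
rewrite big_mkcond; apply: eq_trans (sum_ord_mul_divn _
  (fun i => if P i then ptil beta M i / C%:R else 0) M C C0) _.
rewrite -sumrMnl [RHS]big_mkcond; apply: eq_bigr => i _.
case: (P i); rewrite ?mul0rn // -[(_ / C%:R) *+ C]mulr_natr divfK //.
by rewrite pnatr_eq0 -lt0n.
Qed.

Lemma sum_pitem : \sum_(j < M * C) pitem beta j = \sum_(i < M) ptil beta M i.
Proof. exact: (sum_pitem_cond xpredT). Qed.

Lemma pitem_tail_le (j : 'I_(M * C)) : 0 <= beta -> (M %/ 2 <= j %/ C)%N ->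
  M%:R `^ beta * pitem beta j <= 2 `^ beta * (ptil beta M 0 / C%:R).
Proof.
move=> b0 hj; rewrite /pitem ptilE -mulrA mulrA; apply: ler_wpM2r.
  by rewrite divr_ge0 ?ptil_ge0.
rewrite powRN ler_pdivrMr ?powR_gt0 ?ltr0n // -powRM ?ler0n //.
rewrite ge0_ler_powR ?nnegrE ?mulr_ge0 ?ler0n // -natrM ler_nat.
by move: hj; lia.
Qed.

Lemma gd_tail_budget (a2 ceta eta : R) (T : nat) (j : 'I_(M * C)) :
  0 <= beta -> 0 <= eta -> 0 <= a2 -> T%:R <= a2 * M%:R `^ beta ->
  eta * (ptil beta M 0 / C%:R) <= ceta -> (M %/ 2 <= j %/ C)%N ->
  T%:R * (eta * pitem beta j) <= a2 * 2 `^ beta * ceta.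
Proof.
move=> b0 eta0 a20 hT heta hj.
have pj0 : 0 <= eta * pitem beta j by rewrite mulr_ge0 ?pitem_ge0.
apply: (le_trans (ler_wpM2r pj0 hT)); rewrite -!mulrA ler_wpM2l // mulrCA.
apply: le_trans (ler_wpM2l eta0 (pitem_tail_le _ b0 hj)) _.
by rewrite mulrCA ler_wpM2l ?powR_ge0.
Qed.

End Groups.

Section ExcessLoss.
Context {R : realType}.
Variables (beta alpha : R) (M C : nat).
Hypotheses (alpha01 : 0 < alpha <= 1) (M0 : (0 < M)%N) (C0 : (0 < C)%N).

Lemma loss_subr_Lstar_ge (E Et W : 'M[R]_(M * C)) (L : R) :
  (forall j : 'I_(M * C), (M %/ 2 <= j %/ C)%N ->
     L <= relent_col (@pcond R alpha (M * C)) (Et^T *m W *m E) j) ->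
  L * \sum_(i < M | (M %/ 2 <= i)%N) ptil beta M i <=
  loss beta alpha E Et W - Lstar alpha (M * C).
Proof.
move=> hL; rewrite -(sum_pitem_cond beta _ _ C0 (fun i => M %/ 2 <= i)%N).
have sum_pitem1 : \sum_(j < M * C) pitem beta j = 1.
  by rewrite sum_pitem // sum_ptil.
apply: xent_subr_entropy_ge hL => //;
  [exact: sum_pcond | exact: pcond_ge0 | exact: pitem_ge0 | exact: Lstar_entropy].
Qed.

Lemma loss_gd_logits_tail (E Et : 'M[R]_(M * C)) (a2 ceta eta : R) (T : nat)
    (i j : 'I_(M * C)) :
  E^T *m E = 1%:M -> Et^T *m Et = 1%:M -> 0 <= beta -> 0 <= eta -> 0 <= a2 ->
  T%:R <= a2 * M%:R `^ beta -> eta * (ptil beta M 0 / C%:R) <= ceta ->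
  (M %/ 2 <= j %/ C)%N ->
  `|(Et^T *m gd_iter (loss beta alpha E Et) eta T *m E) i j|
    <= a2 * 2 `^ beta * ceta.
Proof.
move=> hE hEt b0 eta0 a20 hT heta hj.
apply: le_trans (gd_logits_bound _ _ _ _ _ _ _ _ _ _ _ hE hEt eta0) _;
  [exact: sum_pcond | exact: pitem_ge0 | exact: pcond_ge0 | exact: gd_tail_budget].
Qed.

End ExcessLoss.

Theorem theorem5p7 (R : realType) (beta alpha ceta a1 a2 : R) :
  1 < beta -> 0 < alpha < 1 -> 0 < ceta -> 0 < a1 -> a1 <= a2 ->
  exists c : R, 0 < c /\
  exists N : nat, forall M C : nat, (N <= M)%N -> (M <= C)%N ->
  forall E Et : 'M[R]_(M * C),
    E^T *m E = 1%:M -> Et^T *m Et = 1%:M ->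
  forall (eta : R) (T : nat),
    0 < eta -> eta * (@ptil R beta M 0 / C%:R) <= ceta ->
    a1 * (M%:R `^ beta) <= T%:R <= a2 * (M%:R `^ beta) ->
    c * ln ((M * C)%:R) / (T%:R `^ (1 - beta^-1))
      <= @loss R beta alpha M C E Et (gd_iter (@loss R beta alpha M C E Et) eta T)
         - Lstar alpha (M * C).
Proof.
move=> b1 /andP[a0 a1'] ceta0 a10 a12.
have alpha01 : 0 < alpha <= 1 by rewrite a0 ltW.
(* [B] bounds every logit of a tail column; beyond [N], [(1 - alpha) ln K / 2]
   absorbs the constant part [2 B + 1 - alpha ln alpha] of the entropy gap. *)
pose B := a2 * 2 `^ beta * ceta.
have [N hN] := ln_nat_unbounded (2 * (2 * B + 1 - alpha * ln alpha) / (1 - alpha)).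
exists ((beta - 1) / (2 * beta) * a1 `^ (1 - beta^-1) * ((1 - alpha) / 2)); split.
  by rewrite !mulr_gt0 ?powR_gt0 ?invr_gt0 //; lra.
exists N => M C NM MC E Et hE hEt eta T eta0 heta /andP[T1 T2].
have [M0 lnM] := hN M NM; have C0 := leq_trans M0 MC.
have lnMK : ln M%:R <= ln (M * C)%:R :> R.
  by rewrite ler_ln ?posrE ?ltr0n ?muln_gt0 ?M0 // ler_nat leq_pmulr.
have tail_relent (j : 'I_(M * C)) : (M %/ 2 <= j %/ C)%N ->
    (1 - alpha) / 2 * ln (M * C)%:R <= relent_col (@pcond R alpha (M * C))
      (Et^T *m gd_iter (loss beta alpha E Et) eta T *m E) j.
  move=> hj; apply: le_trans (relent_col_pcond_ge _ _ alpha01 _ _ B _) => [|i].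
    suff : 2 * (2 * B + 1 - alpha * ln alpha) <= (1 - alpha) * ln (M * C)%:R.
      by lra.
    by rewrite -ler_pdivrMl; lra.
  by apply: loss_gd_logits_tail => //; lra.
apply: le_trans (loss_subr_Lstar_ge _ _ _ _ alpha01 M0 C0 _ _ _ _ tail_relent).
rewrite -[_ * ((1 - alpha) / 2) * _]mulrA; apply: ptil_tail_rate => //.
by rewrite mulr_ge0 ?(le_trans _ lnMK) ?ln_ge0 ?ler1n //; lra.
Qed.
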